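(* Let $k\ge 2$, let $d:\chi^2\to[0,\infty)$ be a metric on a set $\chi$, and define $d_{\mathrm{HC}}:\chi^k\to[0,\infty)$ by $$d_{\mathrm{HC}}(p_1,\ldots,p_k)=\min_{\pi}\sum_{i=1}^{k} d\big(p_{\pi(i)},p_{\pi(i+1)}\big),$$ where the minimum is over all permutations $\pi$ of $\{1,\ldots,k\}$ and $\pi(k+1):=\pi(1)$ (i.e. the minimum cost of a Hamiltonian circuit through $p_1,\ldots,p_k$). Then $d_{\mathrm{HC}}$ is an $H$-metric with parameter $\gamma=1$.
   Context: For a multiset $S$ of elements of $\chi$, $elem(S)$ denotes the set of distinct elements of $S$. An $H$-metric with parameter $\gamma$ (where $\gamma$ is an integer with $1\le\gamma\le k-1$) is a function $d_H:\chi^k\to[0,\infty)$ satisfying: ($\Pi$) $d_H(p_1,\ldots,p_k)$ is invariant under permuting its arguments; ($O_D$) $d_H(p_1,\ldots,p_k)\ge 0$, with equality if and only if $p_1=\cdots=p_k$; ($\Delta_H$) for all $p_1,\ldots,p_k,a\in\chi$ and all $i\in\{1,\ldots,k\}$, $d_H(p_1,\ldots,p_k)\le d_H(p_1,\ldots,p_i,a,\ldots,a)+d_H(a,\ldots,a,p_{i+1},\ldots,p_k)$, where $a$ appears $k-i$ times in the first term and $i$ times in the second; ($\mathcal S_H$) for all $p_1,\ldots,p_k,p'_1,\ldots,p'_k\in\chi$: if $elem(\{p_1,\ldots,p_k\})\subsetneq elem(\{p'_1,\ldots,p'_k\})$ then $d_H(p_1,\ldots,p_k)\le d_H(p'_1,\ldots,p'_k)$,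 and if $elem(\{p_1,\ldots,p_k\})= elem(\{p'_1,\ldots,p'_k\})$ then $d_H(p_1,\ldots,p_k)\le \gamma\, d_H(p'_1,\ldots,p'_k)$. *)

From HB Require Import structures.
From mathcomp Require Import all_boot all_order all_algebra all_fingroup.
Set Implicit Arguments. Unset Strict Implicit. Unset Printing Implicit Defensive.
Import Order.TTheory GRing.Theory Num.Theory.
Local Open Scope ring_scope.

Definition is_metric (R : realFieldType) (chi : Type) (d : chi -> chi -> R) : Prop :=
  (forall x y, 0 <= d x y) /\
  (forall x y, d x y = 0 <-> x = y) /\
  (forall x y, d x y = d y x) /\
  (forall x y z, d x z <= d x y + d y z).

Definition elem (chi : Type) (k : nat) (p : 'I_k -> chi) : chi -> Prop :=
  fun x => exists i, p i = x.

Definition is_Hmetric (R : realFieldType) (chi : Type) (k gamma : nat)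
    (dH : ('I_k -> chi) -> R) : Prop :=
  [/\ (1 <= gamma <= k.-1)%N,
      (forall (p : 'I_k -> chi) (s : 'S_k), dH (fun j => p (s j)) = dH p),
      (forall p : 'I_k -> chi, 0 <= dH p /\
          (dH p = 0 <-> forall i j : 'I_k, p i = p j)),
      (forall (p : 'I_k -> chi) (a : chi) (i : nat), (1 <= i <= k)%N ->
          dH p <= dH (fun j : 'I_k => if (j < i)%N then p j else a)
                  + dH (fun j : 'I_k => if (j < i)%N then a else p j)) &
      (forall p p' : 'I_k -> chi,
          ((forall x, elem p x -> elem p' x) /\ (exists x, elem p' x /\ ~ elem p x)
             -> dH p <= dH p') /\
          ((forall x, elem p x <-> elem p' x) -> dH p <= gamma%:R * dH p'))].

Definition hc_cost (R : realFieldType) (chi : Type) (d : chi -> chi -> R) (k : nat)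
    (p : 'I_k -> chi) (s : 'S_k) : R :=
  \sum_(i < k) d (p (s i)) (p (s (ordS i))).

(* d_HC: minimum over all permutations (the seed hc_cost 1 is itself one of the terms). *)
Definition d_HC (R : realFieldType) (chi : Type) (d : chi -> chi -> R) (k : nat)
    (p : 'I_k -> chi) : R :=
  \big[Num.min/hc_cost d p 1%g]_(s : 'S_k) hc_cost d p s.

From HB Require Import structures.
From mathcomp Require Import all_boot all_order all_algebra all_fingroup.
From mathcomp Require Import zify lra.
Import Order.TTheory GRing.Theory Num.Theory.
Set Implicit Arguments. Unset Strict Implicit.
Local Open Scope ring_scope.

(* Every closed walk visiting all the points p_i costs at least d_HC(p): taking the
   points in the order in which the walk visits them gives a Hamiltonian circuit,
   and by the triangle inequality each of its edges is no longer than the piece of walk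
   it shortcuts.  Optimal circuits are closed walks through any of their points, so
   d_HC is monotone in elem(p), which gives (Pi) and (S_H) with gamma = 1, and for
   (Delta_H) the two optimal circuits of the right-hand side, both rooted at a, are
   glued into one closed walk through every p_i. *)

Section Walks.
Variables (R : realFieldType) (chi : Type) (d : chi -> chi -> R).

Definition walk_cost (f : nat -> chi) (a b : nat) : R :=
  \sum_(a <= n < b) d (f n) (f n.+1).

Lemma walk_cost_cat f a b c : (a <= b)%N -> (b <= c)%N ->
  walk_cost f a c = walk_cost f a b + walk_cost f b c.
Proof. by move=> ab bc; rewrite /walk_cost (big_cat_nat ab bc). Qed.

Lemma walk_cost1 f a : walk_cost f a a.+1 = d (f a) (f a.+1).
Proof. by rewrite /walk_cost big_nat1. Qed.

Lemma walk_cost_shift f r a b :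
  walk_cost (fun n => f (n + r)%N) a b = walk_cost f (a + r) (b + r).
Proof.
rewrite /walk_cost big_addn addnK.
by apply: eq_bigr => n _; rewrite addSn.
Qed.

Lemma walk_cost_periodic f K r : (forall n, f (n + K)%N = f n) ->
  walk_cost f r (r + K) = walk_cost f 0 K.
Proof.
move=> fK; elim: r => [//|r IH].
have split_first := walk_cost_cat f (leqnSn r) (leq_addr K r.+1).
have split_last := walk_cost_cat f (leq_addr K r) (leqnSn (r + K)).
rewrite addSn in split_first; rewrite -IH.
move: split_first split_last; rewrite !walk_cost1 fK -addSn fK addSn; lra.
Qed.

Hypothesis d_metric : is_metric d.

Lemma walk_cost_ge0 f a b : 0 <= walk_cost f a b.
Proof. by case: d_metric => d_ge0 _; apply: sumr_ge0 => n _; apply: d_ge0. Qed.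

Lemma dist_le_walk_cost f a b : (a <= b)%N -> d (f a) (f b) <= walk_cost f a b.
Proof.
case: d_metric => _ [d_eq0 [_ d_tri]].
have d_refl x : d x x = 0 by apply/d_eq0.
elim: b => [|b IH].
  by rewrite leqn0 => /eqP->; rewrite /walk_cost big_geq // d_refl.
rewrite leq_eqVlt ltnS => /orP[/eqP->|ab].
  by rewrite /walk_cost big_geq // d_refl.
rewrite (walk_cost_cat f ab (leqnSn b)) walk_cost1.
exact: le_trans (d_tri _ (f b) _) (lerD (IH ab) (lexx _)).
Qed.

Lemma walk_cost_subwalk f (a : nat -> nat) n : {homo a : i j / (i <= j)%N} ->
  walk_cost (fun j => f (a j)) 0 n <= walk_cost f (a 0%N) (a n).
Proof.
move=> a_mono; elim: n => [|n IH]; first by rewrite /walk_cost !big_geq.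
rewrite (walk_cost_cat _ (leq0n n) (leqnSn n)) walk_cost1.
rewrite (walk_cost_cat f (a_mono _ _ (leq0n n)) (a_mono _ _ (leqnSn n))).
by apply: lerD => //; apply: dist_le_walk_cost; apply: a_mono.
Qed.

(* The closing edge from h l back to h 0 is bounded by the two end pieces of f. *)
Lemma walk_cost_closed_subwalk f h (a : nat -> nat) m l :
  f m = f 0%N -> {homo a : i j / (i <= j)%N} -> (a l <= m)%N ->
  (forall j, (j <= l)%N -> h j = f (a j)) -> h l.+1 = h 0%N ->
  walk_cost h 0 l.+1 <= walk_cost f 0 m.
Proof.
move=> f_closed a_mono al_m h_a h_closed.
have a0_l := a_mono _ _ (leq0n l).
have [_ [_ [_ d_tri]]] := d_metric.
have body : walk_cost h 0 l = walk_cost (fun j => f (a j)) 0 l.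
  by apply: eq_big_nat => j /andP[_ jl]; rewrite !h_a // ltnW.
rewrite (walk_cost_cat h (leq0n l) (leqnSn l)) walk_cost1 body h_closed !h_a //.
rewrite (walk_cost_cat f (leq0n _) (leq_trans a0_l al_m)).
rewrite (walk_cost_cat f a0_l al_m) addrCA.
apply: lerD; first exact: walk_cost_subwalk.
apply: le_trans (d_tri _ (f m) _) _.
rewrite addrC; apply: lerD; first exact: dist_le_walk_cost al_m.
by rewrite f_closed; apply: dist_le_walk_cost.
Qed.

End Walks.

Definition visits (chi : Type) (k : nat) (f : nat -> chi) (m : nat) (p : 'I_k -> chi) :=
  forall i, exists2 n, (n <= m)%N & f n = p i.

Lemma visits_sub (chi : Type) (k l : nat) (f : nat -> chi) m (p : 'I_k -> chi)
    (q : 'I_l -> chi) :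
  (forall x, elem p x -> elem q x) -> visits f m q -> visits f m p.
Proof. by move=> pq f_q i; have [j <-] := pq _ (ex_intro _ i erefl); apply: f_q. Qed.

(* s sorts the points by a chosen visit time t, and a j := t (s j) is frozen after
   j = k so that it is monotone on all of nat. *)
Lemma visits_in_order (chi : Type) (k : nat) (f : nat -> chi) m
    (p : 'I_k.+1 -> chi) : visits f m p ->
  exists s : 'S_k.+1, exists a : nat -> nat,
    [/\ {homo a : i j / (i <= j)%N}, (a k <= m)%N &
        forall j : 'I_k.+1, f (a j) = p (s j)].
Proof.
move=> f_p; have [t t_visit] : exists t : 'I_k.+1 -> nat,
    forall i, (t i <= m)%N /\ f (t i) = p i.
  apply: (@fin_all_exists _ (fun=> nat) (fun i n => (n <= m)%N /\ f n = p i)) => i.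
  by have [n] := f_p i; exists n.
pose by_time := [rel i j : 'I_k.+1 | (t i <= t j)%N].
pose order := sort by_time (enum 'I_k.+1).
have order_perm : perm_eq order (enum 'I_k.+1) by rewrite perm_sort.
have order_size : size order = k.+1 by rewrite (perm_size order_perm) size_enum_ord.
have order_sorted : sorted by_time order.
  by apply: sort_sorted => i j; apply: leq_total.
have nth_inj : injective (fun j : 'I_k.+1 => nth ord0 order j).
  move=> i j /eqP; rewrite nth_uniq ?order_size ?(perm_uniq order_perm) ?enum_uniq //.
  by move=> /eqP; apply: val_inj.
pose s := perm nth_inj; pose a j := t (s (inord (minn j k))).
exists s, a; split.
- apply: homo_leq => [//|j i l|j]; first exact: leq_trans.
  rewrite /a !permE /= !inordK; try lia.
  apply: (sorted_leq_nth _ _ ord0 order_sorted); rewrite ?inE ?order_size //=; try lia.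
  + by move=> i l n /=; apply: leq_trans.
  + by move=> i /=.
- exact: (proj1 (t_visit _)).
- move=> j; rewrite /a (proj2 (t_visit _)); congr (p (s _)).
  by apply: val_inj; have := ltn_ord j; rewrite /= inordK; lia.
Qed.

Section Tours.
Variables (R : realFieldType) (chi : Type) (d : chi -> chi -> R) (k : nat).
Implicit Types (p q : 'I_k.+1 -> chi) (s : 'S_k.+1).

Definition tour p s (n : nat) : chi := p (s (inord (n %% k.+1))).

Lemma tour_ord p s (j : 'I_k.+1) : tour p s j = p (s j).
Proof. by rewrite /tour modn_small // inord_val. Qed.

Lemma tour_periodic p s n : tour p s (n + k.+1) = tour p s n.
Proof. by rewrite /tour modnDr. Qed.

Lemma hc_cost_tour p s : hc_cost d p s = walk_cost d (tour p s) 0 k.+1.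
Proof.
rewrite /hc_cost /walk_cost big_mkord; apply: eq_bigr => i _.
rewrite tour_ord /tour; congr (d _ (p (s _))).
by apply: val_inj; rewrite /= inordK // ltn_pmod.
Qed.

Lemma d_HC_le_hc_cost p s : d_HC d p <= hc_cost d p s.
Proof. by rewrite /d_HC (bigD1 s) //= ge_min lexx. Qed.

Lemma d_HC_attained p : exists s, d_HC d p = hc_cost d p s.
Proof.
apply: (big_ind (fun x => exists s, x = hc_cost d p s)) => [|x y [s ->] [t ->]|s _].
- by exists 1%g.
- by case: (lerP (hc_cost d p s) (hc_cost d p t)); [exists s | exists t].
- by exists s.
Qed.

Lemma optimal_closed_walk p (i0 : 'I_k.+1) : exists f : nat -> chi,
  [/\ f 0%N = p i0, f k.+1 = f 0%N, visits f k.+1 p & walk_cost d f 0 k.+1 = d_HC d p].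
Proof.
have [s ->] := d_HC_attained p; pose r := (s^-1 i0)%g.
exists (fun n => tour p s (n + r)); split.
- by rewrite add0n tour_ord permKV.
- by rewrite addnC tour_periodic.
- move=> i; pose j := (s^-1 i)%g; have j_lt := ltn_ord j.
  have [r_j | j_r] := leqP r j.
    by exists (j - r)%N; [lia | rewrite subnK // tour_ord permKV].
  exists (j + k.+1 - r)%N; first lia.
  rewrite subnK ?tour_periodic ?tour_ord ?permKV //.
  exact: leq_trans (ltnW (ltn_ord r)) (leq_addl _ _).
- rewrite walk_cost_shift add0n addnC hc_cost_tour.
  exact/walk_cost_periodic/tour_periodic.
Qed.

Hypothesis d_metric : is_metric d.

Lemma d_HC_le_closed_walk p (f : nat -> chi) m :
  f m = f 0%N -> visits f m p -> d_HC d p <= walk_cost d f 0 m.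
Proof.
move=> f_closed /visits_in_order [s [a [a_mono ak_m f_a]]].
apply: le_trans (d_HC_le_hc_cost p s) _; rewrite hc_cost_tour.
apply: (walk_cost_closed_subwalk d_metric f_closed a_mono ak_m).
- move=> j jk; have -> : j = Ordinal (jk : (j < k.+1)%N) by [].
  by rewrite tour_ord f_a.
- by rewrite -[k.+1]add0n tour_periodic.
Qed.

Lemma d_HC_ge0 p : 0 <= d_HC d p.
Proof. by have [s ->] := d_HC_attained p; rewrite hc_cost_tour walk_cost_ge0. Qed.

Lemma d_HC_mono p q : (forall x, elem p x -> elem q x) -> d_HC d p <= d_HC d q.
Proof.
move=> pq; have [f [_ f_closed f_q <-]] := optimal_closed_walk q ord0.
exact: d_HC_le_closed_walk f_closed (visits_sub pq f_q).
Qed.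

Lemma d_HC_eq0 p : d_HC d p = 0 <-> forall i j, p i = p j.
Proof.
have [d_ge0 [d_eq0 _]] := d_metric; split => [p0 | p_const].
  have [f [_ _ f_p]] := optimal_closed_walk p ord0; rewrite p0 => f0.
  have f_const n : (n <= k.+1)%N -> f n = f 0%N.
    move=> nk; apply/esym/d_eq0/le_anti; rewrite d_ge0 andbT -f0.
    rewrite (walk_cost_cat d _ (leq0n n) nk) -[X in X <= _]addr0.
    exact: lerD (dist_le_walk_cost d_metric f (leq0n n)) (walk_cost_ge0 d_metric _ _ _).
  move=> i j; have [n nk <-] := f_p i; have [n' n'k <-] := f_p j.
  by rewrite !f_const.
apply/le_anti; rewrite d_HC_ge0 andbT; apply: le_trans (d_HC_le_hc_cost p 1%g) _.
by rewrite /hc_cost big1 // => i _; apply/d_eq0.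
Qed.

(* Glue optimal circuits of p1 and p2, both rooted at the common point x. *)
Lemma d_HC_le_add p p1 p2 (x : chi) :
  elem p1 x -> elem p2 x -> (forall y, elem p y -> elem p1 y \/ elem p2 y) ->
  d_HC d p <= d_HC d p1 + d_HC d p2.
Proof.
move=> [i1 x1] [i2 x2] p_12.
have [f1 [f10 f1K f1_p1 <-]] := optimal_closed_walk p1 i1.
have [f2 [f20 f2K f2_p2 <-]] := optimal_closed_walk p2 i2.
pose f n := if (n <= k.+1)%N then f1 n else f2 (n - k.+1)%N.
have f_left n : (n <= k.+1)%N -> f n = f1 n by rewrite /f => ->.
have f_right n : (n <= k.+1)%N -> f (n + k.+1)%N = f2 n.
  case: n => [|n] nk; first by rewrite f_left // f1K f10 f20 x1 x2.
  by rewrite /f ifN ?addnK //; lia.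
have cost : walk_cost d f 0 (k.+1 + k.+1) = walk_cost d f1 0 k.+1 + walk_cost d f2 0 k.+1.
  rewrite (walk_cost_cat d _ (leq0n _) (leq_addr _ _)); congr (_ + _).
    by apply: eq_big_nat => n /andP[_ nk]; rewrite !f_left // ltnW.
  rewrite -[in LHS](add0n k.+1) -walk_cost_shift.
  by apply: eq_big_nat => n /andP[_ nk]; rewrite !f_right // ltnW.
rewrite -cost; apply: d_HC_le_closed_walk.
  by rewrite f_right // f_left // f2K f20 f10 x1 x2.
move=> i; case: (p_12 _ (ex_intro _ i erefl)) => [[j <-] | [j <-]].
  by have [n nk <-] := f1_p1 j; exists n; [lia | rewrite f_left].
by have [n nk <-] := f2_p2 j; exists (n + k.+1)%N; [lia | rewrite f_right].
Qed.

End Tours.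

Theorem proposition2 (R : realFieldType) (chi : Type) (k : nat)
    (d : chi -> chi -> R) :
  (2 <= k)%N -> is_metric d -> is_Hmetric 1%N (d_HC d (k:=k)).
Proof.
case: k => [//|k] k_ge2 d_metric.
have mono := d_HC_mono d_metric.
split.
- by apply/andP; split => //=; lia.
- move=> p s; apply/le_anti/andP; split; apply: mono => _ [i <-].
    by exists (s i).
  by exists (s^-1 i)%g; rewrite permKV.
- by move=> p; split; [exact: d_HC_ge0 | exact: d_HC_eq0].
- move=> p a i /andP[i_gt0 i_le]; case: (ltnP i k.+1) => [i_lt | i_ge].
    apply: (d_HC_le_add d_metric (x := a)).
    + by exists ord_max; rewrite /= ltnNge -ltnS i_lt.
    + by exists ord0; rewrite /= i_gt0.
    + move=> _ [j <-]; case: (ltnP j i) => ji; [left | right]; exists j.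
        by rewrite ji.
      by rewrite ltnNge ji.
  rewrite -[d_HC d p]addr0; apply: lerD; last exact: d_HC_ge0.
  by apply: mono => _ [j <-]; exists j; rewrite (leq_trans (ltn_ord j) i_ge).
- move=> p p'; split; first by case=> sub _; apply: mono.
  by move=> same; rewrite mul1r; apply: mono => x /same.
Qed.
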